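(* Let $\Gamma$ be a nontrivial standard graph and let $f$ be a non-constant real eigenfunction of $\Gamma$. Then $f$ is a Morse eigenfunction if and only if there is no edge $e$ of $\Gamma$ with $f|_e\equiv0$.
   Context: A metric graph is a finite connected graph $\Gamma=(\mathcal{V},\mathcal{E})$ (loops allowed) in which each edge $e$ is identified with an interval $[0,L_e]$, $L_e>0$. The Laplacian acts as $f|_e\mapsto -\frac{d^2}{dx_e^2}f|_e$ on functions in $\bigoplus_{e}H^2([0,L_e])$ satisfying Neumann (Kirchhoff) vertex conditions at every vertex $v$: $f$ is continuous at $v$ and the sum over edges incident to $v$ of the outgoing derivatives of $f$ at $v$ is zero. Such a graph is called standard; it is assumed to have no vertices of degree two, and it is nontrivial if it is not a single loop. An eigenfunction $f$ is called Morse if for each edge $e$, $f|_e$ is a Morse function, i.e. at no interior point of $e$ do both $f|_e'$ and $f|_e''$ vanish. *)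

From HB Require Import structures.
From mathcomp Require Import all_boot all_order all_algebra.
From mathcomp Require Import all_classical all_reals all_analysis.
Set Implicit Arguments. Unset Strict Implicit. Unset Printing Implicit Defensive.
Import Order.TTheory GRing.Theory Num.Theory.
Import numFieldNormedType.Exports.
Local Open Scope ring_scope.

(* A finite metric graph: finite vertex and edge types; each edge e is
   identified with [0, len e], its endpoint 0 is [src e], its endpoint
   [len e] is [tgt e] (loops: src e = tgt e). *)
Record metric_graph (R : realType) := MetricGraph {
  vertex : finType;
  edge : finType;
  src : edge -> vertex;
  tgt : edge -> vertex;
  len : edge -> R;
  len_gt0 : forall e, 0 < len e
}.

Section MG.
Variables (R : realType) (G : metric_graph R).

Definition adj : rel (vertex G) := fun u w =>
  [exists e, ((src e == u) && (tgt e == w)) || ((src e == w) && (tgt e == u))].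

Definition connected_graph : Prop := forall u w : vertex G, connect adj u w.

(* degree: number of edge-ends at v (a loop counts twice) *)
Definition degree (v : vertex G) : nat :=
  (#|[set e | src e == v]| + #|[set e | tgt e == v]|)%N.

Definition standard : Prop :=
  connected_graph /\ forall v, degree v <> 2%N.

Definition single_loop : Prop :=
  #|edge G| = 1%N /\ (forall e : edge G, src e = tgt e) /\ #|vertex G| = 1%N.

Definition nontrivial : Prop := ~ single_loop.

Definition on_edge (e : edge G) (x : R) : Prop := 0 <= x <= len e.
Definition in_edge (e : edge G) (x : R) : Prop := 0 < x < len e.

(* f : edge G -> R -> R, f e is (an extension to R of) f|_e on [0, len e].
   Real eigenfunction of the Neumann-Kirchhoff Laplacian with eigenvalue lam:
   on each edge f e is twice differentiable on [0, len e] with -f'' = lam f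
   (every H^2 solution of this ODE is classical and extends to R),
   f is continuous at each vertex, and the sum of outgoing derivatives
   at each vertex vanishes. *)
Definition is_eigenfunction (f : edge G -> R -> R) (lam : R) : Prop :=
  (forall e x, on_edge e x ->
     derivable (f e) x 1 /\ derivable (derive1 (f e)) x 1 /\
     - derive1 (derive1 (f e)) x = lam * f e x) /\
  (forall v : vertex G, exists c : R,
     (forall e, src e = v -> f e 0 = c) /\
     (forall e, tgt e = v -> f e (len e) = c)) /\
  (forall v : vertex G,
     \sum_(e | src e == v) derive1 (f e) 0
     + \sum_(e | tgt e == v) (- derive1 (f e) (len e)) = 0).

Definition real_eigenfunction (f : edge G -> R -> R) : Prop :=
  exists lam : R, is_eigenfunction f lam.

Definition nonconstant (f : edge G -> R -> R) : Prop :=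
  exists e1 x1 e2 x2, on_edge e1 x1 /\ on_edge e2 x2 /\ f e1 x1 <> f e2 x2.

Definition morse (f : edge G -> R -> R) : Prop :=
  forall e x, in_edge e x ->
    ~ (derive1 (f e) x = 0 /\ derive1 (derive1 (f e)) x = 0).

Definition vanishes_on_edge (f : edge G -> R -> R) (e : edge G) : Prop :=
  forall x, on_edge e x -> f e x = 0.

End MG.

(* A non-Morse point x of an edge e has f'(x) = f''(x) = 0. If the eigenvalue
   lam is nonzero, -f'' = lam f also gives f(x) = 0, and the energy f^2 + f'^2,
   whose derivative is bounded by |1 - lam| times itself, vanishes on all of e
   by Gronwall's argument; so f vanishes on e. If lam = 0, f is affine on each
   edge, and weighting the Kirchhoff condition at each vertex by the value of f
   there yields the discrete Green identity sum_e len e * f_e'^2 = 0; hence f is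
   constant on every edge and, the graph being connected, constant. Conversely,
   f and hence f' and f'' vanish identically inside an edge where f = 0. *)

From HB Require Import structures.
From mathcomp Require Import all_boot all_order all_algebra.
From mathcomp Require Import all_classical all_reals all_analysis.
From mathcomp Require Import ring lra.
Set Implicit Arguments. Unset Strict Implicit. Unset Printing Implicit Defensive.
Import Order.TTheory GRing.Theory Num.Theory.
Import numFieldNormedType.Exports.
Local Open Scope classical_set_scope.
Local Open Scope ring_scope.

Section RealFunctions.
Variable R : realType.
Implicit Types (h u E : R -> R) (a b k K : R).

Lemma derivable_MVT h a b : a < b -> (forall x, a <= x <= b -> derivable h x 1) ->
  exists2 c, a < c < b & h b - h a = derive1 h c * (b - a).
Proof.
move=> ab dh.
have dh_oo x : x \in `]a, b[ -> is_derive x 1 h (derive1 h x).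
  rewrite in_itv /= => /andP[ax xb].
  by rewrite derive1E; apply/derivableP/dh; rewrite !ltW.
have h_cont : {within `[a, b], continuous h}.
  by apply: derivable_within_continuous => x; rewrite in_itv; exact: dh.
have [c] := MVT ab dh_oo h_cont; rewrite in_itv /=.
by exists c.
Qed.

Lemma derive1_eq0_oo h a b x : (forall y, a < y < b -> h y = 0) ->
  a < x < b -> derive1 h x = 0.
Proof.
move=> h0 xab; rewrite derive1E (@near_eq_derive _ _ _ h (cst 0)) ?derive_cst //.
have := @near_in_itvoo R a b x; rewrite in_itv /= => /(_ xab).
by apply: filterS => y; rewrite in_itv /=; exact: h0.
Qed.

Lemma is_derive_mul_expR E k x : derivable E x 1 ->
  is_derive x 1 (fun s => E s * expR (k * s)) (expR (k * x) * (k * E x + derive1 E x)).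
Proof.
move=> dE; have dEx : is_derive x 1 E (derive1 E x) by rewrite derive1E; exact: derivableP.
by apply: is_derive_eq; rewrite /GRing.scale /=; ring.
Qed.

Section WeightedMonotone.
Variables (E : R -> R) (k a b : R).
Hypothesis dE : forall s, a <= s <= b -> derivable E s 1.
Let phi s := E s * expR (k * s).

Let dphi s : a <= s <= b -> is_derive s 1 phi (expR (k * s) * (k * E s + derive1 E s)).
Proof. by move=> sab; apply: is_derive_mul_expR; exact: dE. Qed.

Let dphi_oo s : s \in `]a, b[ -> derivable phi s 1.
Proof. by rewrite in_itv /= => /andP[a_s s_b]; have [] := @dphi s; rewrite ?ltW. Qed.

Let derive1_phi s : s \in `]a, b[ ->
  derive1 phi s = expR (k * s) * (k * E s + derive1 E s).
Proof.
rewrite in_itv /= => /andP[a_s s_b].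
by rewrite derive1E; apply: derive_val; apply: dphi; rewrite !ltW.
Qed.

Let phi_cont : {within `[a, b], continuous phi}.
Proof. by apply: derivable_within_continuous => s; rewrite in_itv => /dphi []. Qed.

Lemma mul_expR_ndecr x y : (forall s, a < s < b -> 0 <= k * E s + derive1 E s) ->
  a <= x -> x <= y -> y <= b -> E x * expR (k * x) <= E y * expR (k * y).
Proof.
move=> dEk ax xy yb.
have xab : x \in `[a, b] by rewrite in_itv /=; apply/andP; split; lra.
have yab : y \in `[a, b] by rewrite in_itv /=; apply/andP; split; lra.
apply: (ger0_derive1_le_cc dphi_oo _ phi_cont xab yab xy) => s sab.
by rewrite derive1_phi // mulr_ge0 ?expR_ge0 //; apply: dEk; move: sab; rewrite in_itv.
Qed.

Lemma mul_expR_nincr x y : (forall s, a < s < b -> k * E s + derive1 E s <= 0) ->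
  a <= x -> x <= y -> y <= b -> E y * expR (k * y) <= E x * expR (k * x).
Proof.
move=> dEk ax xy yb.
have xab : x \in `[a, b] by rewrite in_itv /=; apply/andP; split; lra.
have yab : y \in `[a, b] by rewrite in_itv /=; apply/andP; split; lra.
apply: (ler0_derive1_le_cc dphi_oo _ phi_cont yab xab xy) => s sab.
by rewrite derive1_phi // mulr_ge0_le0 ?expR_ge0 //; apply: dEk; move: sab; rewrite in_itv.
Qed.
End WeightedMonotone.

Lemma gronwall_eq0 E K a b x0 :
  (forall s, a <= s <= b -> derivable E s 1) ->
  (forall s, a <= s <= b -> 0 <= E s) ->
  (forall s, a <= s <= b -> `|derive1 E s| <= K * E s) ->
  a <= x0 <= b -> E x0 = 0 -> forall t, a <= t <= b -> E t = 0.
Proof.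
move=> dE E_ge0 dE_le /andP[ax0 x0b] Ex0 t /andP[a_t t_b].
apply/eqP; rewrite eq_le E_ge0 ?a_t ?t_b // andbT.
have dE_bounds s : a < s < b -> - (K * E s) <= derive1 E s <= K * E s.
  by move=> /andP[a_s s_b]; rewrite -ler_norml dE_le // !ltW.
have [tx0|x0t] := leP t x0.
- have := mul_expR_ndecr (k := K) dE _ a_t tx0 x0b.
  rewrite Ex0 mul0r pmulr_lle0 ?expR_gt0 //; apply=> s /dE_bounds /andP[lo _].
  lra.
- have := mul_expR_nincr (k := - K) dE _ ax0 (ltW x0t) t_b.
  rewrite Ex0 mul0r pmulr_lle0 ?expR_gt0 //; apply=> s /dE_bounds /andP[_ hi].
  lra.
Qed.

Lemma normr_mul2_le_sqr (x y : R) : `|2 * x * y| <= x ^+ 2 + y ^+ 2.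
Proof.
rewrite -mulrA normrM ger0_norm // normrM mulr_natl -real_normK ?num_real //.
by rewrite -[y ^+ 2]real_normK ?num_real // (leif_mean_square_scaled `|x| `|y|).
Qed.

Definition eigen_ode u lam a b : Prop := forall x, a <= x <= b ->
  derivable u x 1 /\ derivable (derive1 u) x 1 /\
  - derive1 (derive1 u) x = lam * u x.

Lemma eigen_ode_subitv u lam a b c d : eigen_ode u lam a b -> a <= c -> d <= b ->
  eigen_ode u lam c d.
Proof.
move=> ode ac db x /andP[cx xd]; apply: ode.
by rewrite (le_trans ac cx) (le_trans xd db).
Qed.

Lemma eigen_ode_eq0 u lam a b x0 : eigen_ode u lam a b ->
  a <= x0 <= b -> u x0 = 0 -> derive1 u x0 = 0 ->
  forall t, a <= t <= b -> u t = 0.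
Proof.
move=> ode x0ab ux0 du0 t tab.
pose E s := u s ^+ 2 + derive1 u s ^+ 2.
have dE s : a <= s <= b -> is_derive s 1 E (2 * u s * derive1 u s * (1 - lam)).
  move=> /ode[du [ddu us]].
  have us' : is_derive s 1 u (derive1 u s) by rewrite derive1E; exact: derivableP.
  have us'' : is_derive s 1 (derive1 u) (derive1 (derive1 u) s).
    by rewrite derive1E; exact: derivableP.
  apply: is_derive_eq.
  have -> : derive1 (derive1 u) s = - (lam * u s) by rewrite -us opprK.
  by rewrite /GRing.scale /=; ring.
have E_eq0 : E t = 0.
  apply: (@gronwall_eq0 E `|1 - lam| a b x0) => // [s /dE[] //|s _|s sab|].
  - by rewrite addr_ge0 ?sqr_ge0.
  - rewrite derive1E; have [_ ->] := dE s sab; rewrite normrM mulrC.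
    by rewrite ler_wpM2l ?normr_ge0 // normr_mul2_le_sqr.
  - by rewrite /E ux0 du0 expr0n /= addr0.
by move/eqP: E_eq0; rewrite paddr_eq0 ?sqr_ge0 // sqrf_eq0 => /andP[/eqP].
Qed.

Lemma eigen_ode0_affine u a b : eigen_ode u 0 a b -> forall t, a <= t <= b ->
  derive1 u t = derive1 u a /\ u t = u a + derive1 u a * (t - a).
Proof.
move=> ode.
have du_cst t : a <= t <= b -> derive1 u t = derive1 u a.
  move=> /andP[+ t_b]; rewrite le_eqVlt => /predU1P[<- //|a_t].
  have [|c /andP[a_c c_t]] := @derivable_MVT (derive1 u) a t a_t.
    by move=> x /(eigen_ode_subitv ode (lexx a) t_b)[? []].
  have cab : a <= c <= b by rewrite !ltW ?(lt_le_trans c_t).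
  have [_ [_ /eqP]] := ode c cab; rewrite mul0r oppr_eq0 => /eqP->.
  by move/eqP; rewrite mul0r subr_eq0 => /eqP.
move=> t tab; split; first exact: du_cst.
case/andP: tab => + t_b; rewrite le_eqVlt => /predU1P[<-|a_t].
  by rewrite subrr mulr0 addr0.
have [|c /andP[a_c c_t]] := @derivable_MVT u a t a_t.
  by move=> x /(eigen_ode_subitv ode (lexx a) t_b)[].
rewrite du_cst ?ltW ?(lt_le_trans c_t) // => /eqP.
by rewrite subr_eq addrC => /eqP.
Qed.

End RealFunctions.

Section EigenfunctionsOnGraphs.
Variables (R : realType) (G : metric_graph R).
Implicit Types (f : edge G -> R -> R) (e : edge G).

Lemma sum_vertex_incidence (c : vertex G -> R) (p q : edge G -> R) :
  \sum_v c v * (\sum_(e | src e == v) p e + \sum_(e | tgt e == v) q e) =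
  \sum_e (c (src e) * p e + c (tgt e) * q e).
Proof.
rewrite big_split /= (partition_big (@src _ G) xpredT) //=.
rewrite [X in _ = _ + X](partition_big (@tgt _ G) xpredT) //= -big_split /=.
apply: eq_bigr => v _; rewrite mulrDr !mulr_sumr.
by congr (_ + _); apply: eq_bigr => e /eqP->.
Qed.

Lemma connected_graph_const (T : eqType) (c : vertex G -> T) :
  connected_graph G -> (forall e, c (src e) = c (tgt e)) -> forall u w, c u = c w.
Proof.
move=> conn c_edge u w.
have closed_c : fingraph.closed (@adj _ G) [pred v | c v == c u].
  move=> x y /existsP[e /orP[] /andP[/eqP<- /eqP<-]];
    by rewrite !inE c_edge.
by have := closed_connect closed_c (conn u w); rewrite !inE eqxx => /esym /eqP.
Qed.

Lemma eigenfunction_ode f lam : is_eigenfunction f lam ->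
  forall e, eigen_ode (f e) lam 0 (len e).
Proof. by move=> [ode _]; exact: ode. Qed.

Lemma eigenfunction_vertex_values f lam : is_eigenfunction f lam ->
  exists c : vertex G -> R, forall e, f e 0 = c (src e) /\ f e (len e) = c (tgt e).
Proof.
move=> [_ [cont _]]; have [c fc] := boolp.choice cont; exists c => e.
by have [+ _] := fc (src e); have [_ +] := fc (tgt e); move=> /(_ e erefl) -> /(_ e erefl) ->.
Qed.

Lemma on_edge_len e : on_edge e (len e).
Proof. by rewrite /on_edge lexx ltW ?len_gt0. Qed.

Lemma eigen0_edge_affine f e t : is_eigenfunction f 0 -> on_edge e t ->
  derive1 (f e) t = derive1 (f e) 0 /\ f e t = f e 0 + derive1 (f e) 0 * t.
Proof. by move=> /eigenfunction_ode /(_ e) /eigen_ode0_affine ode /ode; rewrite subr0. Qed.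

Lemma eigen0_slopes_eq0 f : is_eigenfunction f 0 -> forall e, derive1 (f e) 0 = 0.
Proof.
move=> eig; have [_ [_ kir]] := eig; have [c fc] := eigenfunction_vertex_values eig.
pose s e : R := derive1 (f e) 0.
have affine e := eigen0_edge_affine eig (on_edge_len e).
have kir_s v : \sum_(e | src e == v) s e + \sum_(e | tgt e == v) - s e = 0.
  rewrite -[RHS](kir v); congr (_ + _); apply: eq_bigr => e _.
  by have [-> _] := affine e.
have green : \sum_e len e * s e ^+ 2 = 0.
  have -> : \sum_e len e * s e ^+ 2 = - \sum_e (c (src e) * s e + c (tgt e) * - s e).
    rewrite -sumrN; apply: eq_bigr => e _.
    have [<- <-] := fc e; have [_ ->] := affine e; rewrite /s; ring.
  by rewrite -sum_vertex_incidence big1 ?oppr0 // => v _; rewrite kir_s mulr0.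
have summand_ge0 e : true -> 0 <= len e * s e ^+ 2.
  by move=> _; rewrite mulr_ge0 ?sqr_ge0 // ltW ?len_gt0.
move=> e; move/eqP: (psumr_eq0P summand_ge0 green (i := e) isT).
by rewrite mulf_eq0 gt_eqF ?len_gt0 //= sqrf_eq0 => /eqP.
Qed.

Lemma eigen0_not_nonconstant f : connected_graph G -> is_eigenfunction f 0 ->
  ~ nonconstant f.
Proof.
move=> conn eig [e1 [x1 [e2 [x2 [x1e1 [x2e2 neq]]]]]].
have [c fc] := eigenfunction_vertex_values eig.
have f_edge e t : on_edge e t -> f e t = c (src e).
  move=> et; have [_ ->] := eigen0_edge_affine eig et.
  by rewrite eigen0_slopes_eq0 // mul0r addr0; have [] := fc e.
have c_edge e : c (src e) = c (tgt e).
  by rewrite -(f_edge e _ (on_edge_len e)); have [] := fc e.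
by apply: neq; rewrite !f_edge // (connected_graph_const conn c_edge (src e1) (src e2)).
Qed.

Lemma vanishes_on_edge_not_morse f e : vanishes_on_edge f e -> ~ morse f.
Proof.
move=> f0 morse_f.
have f0_oo y : 0 < y < len e -> f e y = 0.
  by case/andP=> ? ?; apply: f0; rewrite /on_edge !ltW.
have mid : 0 < len e / 2 < len e by have := len_gt0 e; move=> ?; apply/andP; split; lra.
apply: (morse_f e _ mid); split; first exact: derive1_eq0_oo f0_oo mid.
by apply: derive1_eq0_oo mid => y; exact: derive1_eq0_oo f0_oo.
Qed.

Lemma degenerate_critical_vanishes_on_edge f lam e x : is_eigenfunction f lam ->
  lam != 0 -> in_edge e x -> derive1 (f e) x = 0 -> derive1 (derive1 (f e)) x = 0 ->
  vanishes_on_edge f e.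
Proof.
move=> eig lam_neq0 /andP[x_gt0 x_lt] df0 ddf0.
have ode := eigenfunction_ode (e := e) eig.
have xe : 0 <= x <= len e by rewrite !ltW.
have fx0 : f e x = 0.
  have [_ [_ /eqP]] := ode x xe.
  by rewrite ddf0 oppr0 eq_sym mulf_eq0 (negbTE lam_neq0) => /eqP.
by move=> t te; exact: (eigen_ode_eq0 ode xe fx0 df0 te).
Qed.

End EigenfunctionsOnGraphs.

Theorem lemma7p2 (R : realType) (G : metric_graph R) (f : edge G -> R -> R) :
  standard G -> nontrivial G -> real_eigenfunction f -> nonconstant f ->
  (morse f <-> ~ (exists e : edge G, vanishes_on_edge f e)).
Proof.
move=> [conn _] _ [lam eig] nonconst; split.
- by move=> morse_f [e /vanishes_on_edge_not_morse].
- move=> no_zero_edge e x xe [df0 ddf0].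
  have [lam0|lam_neq0] := eqVneq lam 0.
    by rewrite lam0 in eig; exact: eigen0_not_nonconstant conn eig nonconst.
  apply: no_zero_edge; exists e.
  exact: degenerate_critical_vanishes_on_edge eig lam_neq0 xe df0 ddf0.
Qed.
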